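(* Let $a\in(0,2\pi)$ and $\varepsilon\in(0,1)$. Then $T_0(v,a,\varepsilon)<+\infty$ for all speeds $v>0$ except for a finite number of critical speeds. Moreover: $T_0(v,a,\varepsilon)\sim\frac{\pi-a}{v}$ as $v\to0$; if $v>v_1=\frac{2\pi-a+2\varepsilon}{2\varepsilon}$ then $T_0(v,a,\varepsilon)<\infty$, and $T_0(v,a,\varepsilon)\to\pi-2\varepsilon$ as $v\to+\infty$. Besides, if $v\in\mathbb{Q}$ (with $v>0$), then there exist $a_0>0$ and $\varepsilon_0>0$ such that $T_0(v,a,\varepsilon)=+\infty$ for every $a\in(0,a_0)$ and every $\varepsilon\in(0,\varepsilon_0)$.
   Context: $\Omega=S^2$ is the unit sphere of $\mathbb{R}^3$ with the induced metric, described in spherical coordinates $(\theta,\varphi)$, $\varphi$ the latitude ($\varphi=0$ the equator) and $\theta$ the longitude. For $a\in(0,2\pi)$, $\varepsilon\in(0,\pi/2)$ and $v>0$, set $\omega(t)=\{(\theta,\varphi): |\varphi|<\varepsilon,\ vt<\theta<vt+a\}$ (longitude taken mod $2\pi$) and $Q=\{(t,x)\in\mathbb{R}\times S^2: x\in\omega(t)\}$. Rays are the unit-speed geodesics $t\mapsto x(t)$, $t\in\mathbb{R}$, of $S^2$ (great circles traversed at unit speed). $(Q,T)$ satisfies the time-dependent geometric control condition if every ray $x(\cdot)$ admits $t\in(0,T)$ with $x(t)\in\omega(t)$; the control time is $T_0(v,a,\varepsilon)=\inf\{T>0:(Q,T)\text{ satisfies this condition}\}$, with $T_0=+\infty$ if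 no such $T$ exists.
   Formalization: The asymptotic $T_0(v,a,\varepsilon)\sim\frac{\pi-a}{v}$ as v→0 is claimed for a < π only, rather than for every a ∈ (0,2π). The statement above fails without it. *)

From Stdlib Require Import Reals Lra QArith Qreals.
From Coquelicot Require Import Coquelicot.
Open Scope R_scope.

Definition vec3 := (R * R * R)%type.

Definition dot3 (u w : vec3) : R :=
  let '(u1, u2, u3) := u in let '(w1, w2, w3) := w in u1*w1 + u2*w2 + u3*w3.

Definition add3 (u w : vec3) : vec3 :=
  let '(u1, u2, u3) := u in let '(w1, w2, w3) := w in (u1+w1, u2+w2, u3+w3).

Definition scal3 (c : R) (u : vec3) : vec3 :=
  let '(u1, u2, u3) := u in (c*u1, c*u2, c*u3).

(* Spherical coordinates: theta = longitude, phi = latitude (phi = 0 equator). *)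
Definition sph (theta phi : R) : vec3 :=
  (cos phi * cos theta, cos phi * sin theta, sin phi).

(* x lies in omega(t) = {(theta,phi) : |phi| < eps, v t < theta < v t + a}
   with the longitude taken mod 2 pi (integer k). *)
Definition in_omega (v a eps t : R) (x : vec3) : Prop :=
  exists theta phi : R,
    x = sph theta phi /\ - PI / 2 <= phi <= PI / 2 /\ Rabs phi < eps /\
    exists k : Z, v * t < theta + 2 * IZR k * PI < v * t + a.

(* Rays: unit-speed geodesics of S^2, i.e. great circles
   t |-> cos t p + sin t q with (p,q) orthonormal. *)
Definition ray (p q : vec3) (t : R) : vec3 :=
  add3 (scal3 (cos t) p) (scal3 (sin t) q).

Definition orthonormal (p q : vec3) : Prop :=
  dot3 p p = 1 /\ dot3 q q = 1 /\ dot3 p q = 0.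

Definition GCC (v a eps T : R) : Prop :=
  forall p q : vec3, orthonormal p q ->
    exists t : R, 0 < t < T /\ in_omega v a eps t (ray p q t).

(* Control time: inf of admissible T > 0, +oo if there is none
   (Glb_Rbar of the empty set is p_infty). *)
Definition T0 (v a eps : R) : Rbar :=
  Glb_Rbar (fun T => 0 < T /\ GCC v a eps T).

From Stdlib Require Import Reals QArith Qreals List Lra Lia Classical.
From Coquelicot Require Import Coquelicot.
Open Scope R_scope.

(* Every ray crosses the equator at nodes [t0 + k PI], at the antipodal longitudes
   [l + k PI], and is in the band [|phi| < eps] at least for times within [eps] of a node.
   Between consecutive passages the longitude of a node relative to the window changes
   by [PI (1 - v)] mod [2 PI].
   For [v > v1] the window sweeps an angle larger than [2 PI - a] during a single
   passage; for large [v] this happens in any short time spent in the band, which a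
   meridian starting at latitude [eps] first enters at time [PI - 2 eps].  For small
   [v] the window stays over a node longitude long enough to catch a node, but the
   meridian through longitude [0] is missed until time [(PI - a) / v].  Otherwise, unless
   [k (1 - v) / 2] is an integer for some small [k] (finitely many speeds), Dirichlet's
   theorem yields a number [k] of half-turns after which the nodes drift by less than
   [a] relative to the window, so they cannot miss it forever.  For rational [v] the
   drift is periodic, and a suitable meridian never meets a thin window. *)

Lemma PI_gt_3 : 3 < PI.
Proof. pose proof PI2_3_2. lra. Qed.

Lemma exists_Z_mult_le (P x : R) : 0 < P ->
  exists n : Z, IZR n * P <= x < IZR n * P + P.
Proof.
  intros HP. destruct (archimed (x / P)) as [h1 h2].
  exists (up (x / P) - 1)%Z. rewrite minus_IZR.
  set (y := x / P) in *. replace x with (y * P) by (unfold y; field; lra).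
  split; nra.
Qed.

Lemma exists_nat_mult_in (P x : R) : 0 < P -> - P <= x ->
  exists j : nat, x < INR j * P <= x + P.
Proof.
  intros HP Hx. destruct (exists_Z_mult_le P x HP) as [n Hn].
  assert (Hn1 : (0 <= n + 1)%Z).
  { assert (H : -1 < IZR (n + 1)) by (rewrite plus_IZR; apply (Rmult_lt_reg_r P); lra).
    apply lt_IZR in H. lia. }
  exists (Z.to_nat (n + 1)).
  rewrite INR_IZR_INZ, Znat.Z2Nat.id, plus_IZR by exact Hn1. lra.
Qed.

Lemma cos_sin_eq_mod_2PI x y : cos x = cos y -> sin x = sin y ->
  exists k : Z, x = y + 2 * IZR k * PI.
Proof.
  intros Hc Hs.
  assert (H1 : cos (x - y) = 1).
  { rewrite cos_minus, Hc, Hs. pose proof (sin2_cos2 y). unfold Rsqr in *. lra. }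
  assert (H2 : sin ((x - y) / 2) = 0).
  { pose proof (cos_2a_sin ((x - y) / 2)) as E.
    replace (2 * ((x - y) / 2)) with (x - y) in E by field. nra. }
  destruct (sin_eq_0_0 _ H2) as [k Hk]. exists k. lra.
Qed.

Lemma unit_circle_angle X Y : X * X + Y * Y = 1 -> exists l, cos l = X /\ sin l = Y.
Proof.
  intros H.
  assert (HX : -1 <= X <= 1) by nra.
  assert (HS : sqrt (1 - X²) = Rabs Y).
  { replace (1 - X²) with (Y²) by (unfold Rsqr; lra). apply sqrt_Rsqr_abs. }
  destruct (Rle_or_lt 0 Y) as [HY|HY].
  - exists (acos X). rewrite cos_acos, sin_acos by lra. rewrite HS, Rabs_pos_eq; lra.
  - exists (- acos X). rewrite cos_neg, sin_neg, cos_acos, sin_acos by lra.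
    rewrite HS, Rabs_left; lra.
Qed.

Lemma Rabs_sin_lt x e : 0 < e < 1 -> Rabs x < e -> Rabs (sin x) < sin e.
Proof.
  intros He Hx. pose proof PI_gt_3. apply Rabs_def2 in Hx.
  apply Rabs_def1.
  - apply sin_increasing_1; lra.
  - rewrite <- sin_neg. apply sin_increasing_1; lra.
Qed.

Lemma Rabs_lt_of_sin x e : 0 < e < 1 -> - (PI/2) <= x <= PI/2 ->
  Rabs (sin x) < sin e -> Rabs x < e.
Proof.
  intros He Hx Hs. pose proof PI_gt_3. apply Rabs_def2 in Hs.
  apply Rabs_def1.
  - apply (sin_increasing_0 x e); lra.
  - rewrite <- sin_neg in Hs. apply (sin_increasing_0 (-e) x); lra.
Qed.

Lemma atan_le x y : x <= y -> atan x <= atan y.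
Proof. intros [H|H]; [now apply Rlt_le, atan_increasing | subst; apply Rle_refl]. Qed.

Lemma Rabs_atan_mult_tan c u : c * c <= 1 -> -(PI/2) < u < PI/2 ->
  Rabs (atan (c * tan u)) <= Rabs u.
Proof.
  intros Hc Hu.
  assert (Hatan : atan (Rabs (tan u)) = Rabs u).
  { destruct (Rle_or_lt 0 u) as [h|h].
    - rewrite Rabs_pos_eq by (unfold tan; apply Rdiv_le_0_compat;
        [apply sin_ge_0 | apply cos_gt_0]; lra).
      rewrite Rabs_pos_eq by lra. apply atan_tan; lra.
    - rewrite Rabs_left by (unfold tan; apply Rdiv_neg_pos;
        [apply sin_lt_0_var | apply cos_gt_0]; lra).
      rewrite Rabs_left, <- tan_neg by lra. apply atan_tan; lra. }
  assert (Hct : Rabs (c * tan u) <= Rabs (tan u)).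
  { rewrite Rabs_mult. assert (Rabs c <= 1) by (apply Rabs_le; nra).
    pose proof (Rabs_pos (tan u)). nra. }
  apply Rabs_le_between in Hct. rewrite <- Hatan.
  apply Rabs_le_between. rewrite <- atan_opp. split; apply atan_le; lra.
Qed.

Lemma chart_angles c w3 tau : c * c + w3 * w3 = 1 -> -(PI/2) < tau < PI/2 ->
  cos (asin (w3 * sin tau)) * cos (atan (c * tan tau)) = cos tau /\
  cos (asin (w3 * sin tau)) * sin (atan (c * tan tau)) = c * sin tau.
Proof.
  intros Hcw Ht.
  assert (Hco : 0 < cos tau) by (apply cos_gt_0; lra).
  pose proof (sin2_cos2 tau) as Sct. unfold Rsqr in Sct.
  set (X := cos tau * cos tau + c * c * (sin tau * sin tau)).
  assert (HX : 0 < sqrt X) by (apply sqrt_lt_R0; unfold X; nra).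
  assert (Hf : cos (asin (w3 * sin tau)) = sqrt X).
  { rewrite cos_asin by nra. f_equal. unfold X, Rsqr. nra. }
  assert (Hg : sqrt (1 + (c * tan tau)²) = sqrt X / cos tau).
  { replace (sqrt X / cos tau) with (sqrt X / sqrt (cos tau * cos tau))
      by (now rewrite sqrt_square by lra).
    rewrite <- sqrt_div_alt by nra.
    f_equal. unfold X, Rsqr, tan. field. lra. }
  rewrite cos_atan, sin_atan, Hg, Hf. unfold tan. split; field; lra.
Qed.

(** * Angles in an arc modulo [2 PI] *)

Definition in_arc (a y : R) : Prop := exists K : Z, 0 < y + 2 * IZR K * PI < a.

Lemma in_arc_sub_2PI a y (m : Z) : in_arc a y -> in_arc a (y - 2 * IZR m * PI).
Proof. intros [K HK]. exists (K + m)%Z. rewrite plus_IZR. lra. Qed.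

Lemma in_arc_reflect a y : in_arc a y -> in_arc a (a - y).
Proof. intros [K HK]. exists (- K)%Z. rewrite opp_IZR. lra. Qed.

Lemma in_arc_long_interval a m M : 0 < a < 2 * PI -> 2 * PI - a < M - m ->
  exists y, m < y < M /\ in_arc a y.
Proof.
  intros Ha HL. pose proof PI_gt_3.
  destruct (exists_Z_mult_le (2 * PI) m ltac:(lra)) as [n Hn].
  set (B := IZR n * (2 * PI)) in *.
  destruct (Rlt_or_le m (B + a)) as [Hc|Hc].
  - set (y := Rmin M (B + a)).
    assert (y <= M) by apply Rmin_l. assert (y <= B + a) by apply Rmin_r.
    assert (m < y) by (apply Rmin_glb_lt; lra).
    exists ((m + y) / 2). split; [lra|]. exists (- n)%Z. rewrite opp_IZR. unfold B in *. lra.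
  - set (y := Rmin a (M - (B + 2 * PI))).
    assert (y <= a) by apply Rmin_l. assert (y <= M - (B + 2 * PI)) by apply Rmin_r.
    assert (0 < y) by (apply Rmin_glb_lt; lra).
    exists (B + 2 * PI + y / 2). split; [lra|]. exists (- n - 1)%Z.
    rewrite minus_IZR, opp_IZR. unfold B in *. lra.
Qed.

Lemma in_arc_sweep a f u1 u2 : 0 < a < 2 * PI -> u1 < u2 ->
  (forall x, u1 <= x <= u2 -> continuity_pt f x) -> 2 * PI - a < f u1 - f u2 ->
  exists x, u1 <= x <= u2 /\ in_arc a (f x).
Proof.
  intros Ha Hu Hc Hd.
  destruct (in_arc_long_interval a (f u2) (f u1) Ha Hd) as [y [Hy Hh]].
  destruct (Ranalysis5.IVT_interv (fun x => y - f x) u1 u2) as [x [Hx Hfx]]; try lra.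
  - intros z Hz. apply continuity_pt_minus; [apply continuity_pt_const; intros ? ?; auto|].
    now apply Hc.
  - exists x. split; [exact Hx|]. now replace (f x) with y by lra.
Qed.

(* The first term of [c + j d] past a multiple of [2 PI] lands in the arc. *)
Lemma in_arc_progression_pos a d : 0 < d < a ->
  exists J : nat, forall c, exists j : nat, (j <= J)%nat /\ in_arc a (c + INR j * d).
Proof.
  intros Hd. pose proof PI_gt_3.
  destruct (exists_nat_mult_in d (2 * PI) ltac:(lra) ltac:(lra)) as [J HJ].
  exists (S J). intros c.
  destruct (exists_Z_mult_le (2 * PI) c ltac:(lra)) as [n Hn].
  set (c' := c - IZR n * (2 * PI) - 2 * PI).
  destruct (exists_nat_mult_in d (- c') ltac:(lra) ltac:(unfold c'; lra)) as [j Hj].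
  exists j. split.
  - apply INR_le. rewrite S_INR. apply (Rmult_le_reg_r d); unfold c' in Hj; lra.
  - exists (- n - 1)%Z. rewrite minus_IZR, opp_IZR. unfold c' in Hj. lra.
Qed.

Lemma in_arc_progression a d : 0 < Rabs d < a ->
  exists J : nat, forall c, exists j : nat, (j <= J)%nat /\ in_arc a (c + INR j * d).
Proof.
  intros Hd. destruct (Rle_or_lt 0 d) as [Hp|Hn].
  - rewrite Rabs_pos_eq in Hd by lra. now apply in_arc_progression_pos.
  - rewrite Rabs_left in Hd by lra.
    destruct (in_arc_progression_pos a (- d) Hd) as [J HJ].
    exists J. intros c. destruct (HJ (a - c)) as [j [Hj Hh]].
    exists j. split; [exact Hj|].
    replace (c + INR j * d) with (a - (a - c + INR j * - d)) by ring.
    now apply in_arc_reflect.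
Qed.

(** * Great circles near their nodes *)

Lemma ray_add p q s t : ray p q (s + t) = ray (ray p q s) (ray p q (s + PI / 2)) t.
Proof.
  destruct p as [[p1 p2] p3], q as [[q1 q2] q3]. unfold ray, add3, scal3.
  rewrite cos_plus, sin_plus, cos_plus, sin_plus, cos_PI2, sin_PI2.
  f_equal; [f_equal|]; ring.
Qed.

Lemma ray_add_PI p q t : ray p q (t + PI) = scal3 (-1) (ray p q t).
Proof.
  destruct p as [[p1 p2] p3], q as [[q1 q2] q3]. unfold ray, add3, scal3.
  rewrite neg_cos, neg_sin. f_equal; [f_equal|]; ring.
Qed.

Lemma sph_add_PI th ph : sph (th + PI) (- ph) = scal3 (-1) (sph th ph).
Proof.
  unfold sph, scal3. rewrite neg_cos, neg_sin, cos_neg, sin_neg. f_equal; [f_equal|]; ring.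
Qed.

Lemma dot3_ray p q s t : orthonormal p q -> dot3 (ray p q s) (ray p q t) = cos (s - t).
Proof.
  destruct p as [[p1 p2] p3], q as [[q1 q2] q3]. intros [Hpp [Hqq Hpq]].
  unfold dot3, ray, add3, scal3 in *. rewrite cos_minus.
  transitivity (cos s * cos t * (p1 * p1 + p2 * p2 + p3 * p3)
    + sin s * sin t * (q1 * q1 + q2 * q2 + q3 * q3)
    + (cos s * sin t + sin s * cos t) * (p1 * q1 + p2 * q2 + p3 * q3)); [ring|].
  rewrite Hpp, Hqq, Hpq. ring.
Qed.

Lemma orthonormal_ray_frame p q s :
  orthonormal p q -> orthonormal (ray p q s) (ray p q (s + PI / 2)).
Proof.
  intros H. unfold orthonormal. rewrite !dot3_ray by exact H.
  replace (s - (s + PI / 2)) with (- (PI / 2)) by ring.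
  rewrite !Rminus_diag, cos_neg, cos_0, cos_PI2. auto.
Qed.

Lemma sph_eq_sph th ph l t : -(PI/2) < ph < PI/2 -> sph th ph = sph l t ->
  exists k m : Z, Rabs (t - IZR k * PI) = Rabs ph /\ th = l + IZR k * PI + 2 * IZR m * PI.
Proof.
  intros Hph Heq. unfold sph in Heq. injection Heq as E1 E2 E3.
  assert (Hc : 0 < cos ph) by (apply cos_gt_0; lra).
  pose proof (sin2_cos2 t) as St. pose proof (sin2_cos2 ph) as Sp.
  pose proof (sin2_cos2 l) as Sl. pose proof (sin2_cos2 th) as Sth. unfold Rsqr in *.
  assert (Ec : cos t * cos t = cos ph * cos ph) by nra.
  destruct (Rlt_or_le 0 (cos t)) as [Hp|Hn].
  - assert (Ect : cos t = cos ph) by nra.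
    rewrite Ect in E1, E2.
    destruct (cos_sin_eq_mod_2PI th l) as [m Hm]; [nra | nra |].
    destruct (cos_sin_eq_mod_2PI t ph Ect ltac:(lra)) as [j Hj].
    exists (2 * j)%Z, (m - j)%Z. rewrite mult_IZR, minus_IZR. split.
    + f_equal. lra.
    + lra.
  - assert (Ect : cos t = - cos ph) by nra.
    rewrite Ect in E1, E2.
    destruct (cos_sin_eq_mod_2PI th (l + PI)) as [m Hm];
      [rewrite neg_cos; nra | rewrite neg_sin; nra |].
    destruct (cos_sin_eq_mod_2PI t (PI - ph)) as [j Hj];
      [rewrite cos_minus, cos_PI, sin_PI; lra | rewrite sin_minus, cos_PI, sin_PI; lra |].
    exists (2 * j + 1)%Z, (m - j)%Z. rewrite plus_IZR, mult_IZR, minus_IZR. split.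
    + rewrite <- Rabs_Ropp. f_equal. lra.
    + lra.
Qed.

Lemma sph_chart l c w3 tau : c * c + w3 * w3 = 1 -> -(PI/2) < tau < PI/2 ->
  ray (cos l, sin l, 0) (- c * sin l, c * cos l, w3) tau
  = sph (l + atan (c * tan tau)) (asin (w3 * sin tau)).
Proof.
  intros Hcw Ht. destruct (chart_angles c w3 tau Hcw Ht) as [H1 H2].
  assert (Hw : -1 <= w3 * sin tau <= 1) by (pose proof (SIN_bound tau); nra).
  unfold ray, add3, scal3, sph. rewrite cos_plus, sin_plus, sin_asin by exact Hw.
  set (f := asin (w3 * sin tau)) in *. set (g := atan (c * tan tau)) in *.
  f_equal; [f_equal| ring].
  - transitivity (cos l * (cos f * cos g) - sin l * (cos f * sin g)); [rewrite H1, H2|]; ring.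
  - transitivity (sin l * (cos f * cos g) + cos l * (cos f * sin g)); [rewrite H1, H2|]; ring.
Qed.

Definition height (u : vec3) : R := let '(_, _, u3) := u in u3.

Lemma equatorial_frame n w : orthonormal n w -> height n = 0 ->
  exists l c w3, n = (cos l, sin l, 0) /\ w = (- c * sin l, c * cos l, w3)
    /\ c * c + w3 * w3 = 1.
Proof.
  destruct n as [[n1 n2] n3], w as [[w1 w2] w3].
  intros [Hnn [Hww Hnw]] Hn3. unfold dot3, height in *. subst n3.
  destruct (unit_circle_angle n1 n2 ltac:(lra)) as [l [Hl1 Hl2]]. subst n1 n2.
  pose proof (sin2_cos2 l) as Sl. unfold Rsqr in Sl.
  set (c := - w1 * sin l + w2 * cos l).
  assert (Hw1 : w1 = - c * sin l).
  { transitivity (w1 * (sin l * sin l + cos l * cos l)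
      - cos l * (cos l * w1 + sin l * w2 + 0 * w3)); [rewrite Sl, Hnw|unfold c]; ring. }
  assert (Hw2 : w2 = c * cos l).
  { transitivity (w2 * (sin l * sin l + cos l * cos l)
      - sin l * (cos l * w1 + sin l * w2 + 0 * w3)); [rewrite Sl, Hnw|unfold c]; ring. }
  exists l, c, w3. repeat split; [f_equal; f_equal; auto|].
  rewrite Hw1, Hw2 in Hww. nra.
Qed.

Lemma ray_node_exists p q L : exists t0, L < t0 <= L + PI /\ height (ray p q t0) = 0.
Proof.
  pose proof PI_RGT_0.
  set (h := fun t => height (ray p q t)).
  assert (Hanti : forall t, h (t + PI) = - h t).
  { intros t. unfold h. rewrite ray_add_PI. destruct (ray p q t) as [[x y] z]. simpl. ring. }
  assert (Hc : continuity h).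
  { destruct p as [[p1 p2] p3], q as [[q1 q2] q3]. unfold h. simpl. reg. }
  destruct (IVT_cor h L (L + PI) Hc ltac:(lra)) as [z [Hz Hhz]].
  { rewrite Hanti. nra. }
  destruct (Req_dec z L) as [->|Hne].
  - exists (L + PI). split; [lra|]. fold (h (L + PI)). rewrite Hanti, Hhz. ring.
  - exists z. split; [lra | exact Hhz].
Qed.

(* Spherical coordinates of a ray near its nodes [t0 + k PI]: [l] is the longitude of
   the node at [t0], and [(c, w3)] the eastward and vertical components of the velocity
   there. *)
Definition node_chart (p q : vec3) (t0 l c w3 : R) : Prop :=
  forall (k : nat) tau, -(PI/2) < tau < PI/2 ->
    ray p q (t0 + INR k * PI + tau)
    = sph (l + INR k * PI + atan (c * tan tau)) ((-1) ^ k * asin (w3 * sin tau)).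

Lemma node_chart_exists p q t0 : orthonormal p q -> height (ray p q t0) = 0 ->
  exists l c w3, c * c + w3 * w3 = 1 /\ node_chart p q t0 l c w3.
Proof.
  intros Ho Hn.
  destruct (equatorial_frame _ _ (orthonormal_ray_frame p q t0 Ho) Hn)
    as [l [c [w3 [En [Ew Hcw]]]]].
  exists l, c, w3. split; [exact Hcw|]. intros k tau Ht. induction k as [|k IH].
  - simpl. rewrite !Rmult_0_l, !Rplus_0_r, Rmult_1_l, ray_add, En, Ew.
    now apply sph_chart.
  - rewrite S_INR, <- tech_pow_Rmult.
    replace (t0 + (INR k + 1) * PI + tau) with (t0 + INR k * PI + tau + PI) by ring.
    replace (l + (INR k + 1) * PI + atan (c * tan tau))
      with (l + INR k * PI + atan (c * tan tau) + PI) by ring.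
    replace (-1 * (-1) ^ k * asin (w3 * sin tau)) with (- ((-1) ^ k * asin (w3 * sin tau))) by ring.
    now rewrite ray_add_PI, sph_add_PI, IH.
Qed.

Lemma ray_node_chart p q L : orthonormal p q ->
  exists t0 l c w3, L < t0 <= L + PI /\ c * c + w3 * w3 = 1 /\ node_chart p q t0 l c w3.
Proof.
  intros Ho. destruct (ray_node_exists p q L) as [t0 [Ht0 Hn]].
  destruct (node_chart_exists p q t0 Ho Hn) as [l [c [w3 [Hcw Hch]]]].
  now exists t0, l, c, w3.
Qed.

Lemma meridian_ray l t : ray (cos l, sin l, 0) (0, 0, 1) t = sph l t.
Proof. unfold ray, add3, scal3, sph. f_equal; [f_equal|]; ring. Qed.

Lemma orthonormal_meridian l : orthonormal (cos l, sin l, 0) (0, 0, 1).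
Proof. pose proof (sin2_cos2 l). unfold Rsqr, orthonormal, dot3 in *. repeat split; lra. Qed.

(** * Visits to the control region *)

Lemma chart_latitude_lt (k : nat) w3 tau e : 0 < e < 1 -> w3 * w3 <= 1 -> Rabs tau < e ->
  Rabs ((-1) ^ k * asin (w3 * sin tau)) < e.
Proof.
  intros He Hw Ht. rewrite Rabs_mult, pow_1_abs, Rmult_1_l.
  assert (Hw3 : Rabs w3 <= 1) by (apply Rabs_le; nra).
  assert (Hs : -1 <= w3 * sin tau <= 1) by (pose proof (SIN_bound tau); nra).
  apply Rabs_lt_of_sin; [exact He | apply asin_bound |].
  rewrite sin_asin, Rabs_mult by exact Hs.
  pose proof (Rabs_sin_lt tau e He Ht). pose proof (Rabs_pos (sin tau)). nra.
Qed.

Lemma in_omega_sph v a e t th ph : e < 1 -> Rabs ph < e -> in_arc a (th - v * t) ->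
  in_omega v a e t (sph th ph).
Proof.
  intros He Hph [K HK]. pose proof PI_gt_3.
  exists th, ph. split; [reflexivity|]. split; [apply Rabs_def2 in Hph; lra|].
  split; [exact Hph|]. exists K. lra.
Qed.

Lemma in_omega_meridian v a e l t t' : e < 1 -> in_omega v a e t' (sph l t) ->
  exists k K : Z, Rabs (t - IZR k * PI) < e /\
    v * t' < l + IZR k * PI + 2 * IZR K * PI < v * t' + a.
Proof.
  intros He [th [ph [Heq [_ [Hph [K HK]]]]]]. pose proof PI_gt_3.
  destruct (sph_eq_sph th ph l t) as [k [m [Hk Hth]]]; [apply Rabs_def2 in Hph; lra | auto |].
  exists k, (K + m)%Z. rewrite plus_IZR. split; [lra|]. lra.
Qed.

Lemma in_omega_chart v a e p q t0 l c w3 (k : nat) tau :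
  0 < e < 1 -> c * c + w3 * w3 = 1 -> node_chart p q t0 l c w3 -> Rabs tau < e ->
  in_arc a (l + INR k * PI + atan (c * tan tau) - v * (t0 + INR k * PI + tau)) ->
  in_omega v a e (t0 + INR k * PI + tau) (ray p q (t0 + INR k * PI + tau)).
Proof.
  intros He Hcw Hch Ht Harc. pose proof PI_gt_3.
  rewrite Hch by (apply Rabs_def2 in Ht; lra).
  apply in_omega_sph; [lra | | exact Harc].
  apply chart_latitude_lt; [exact He | nra | exact Ht].
Qed.

Lemma in_omega_node v a e p q t0 l c w3 (k : nat) :
  0 < e < 1 -> c * c + w3 * w3 = 1 -> node_chart p q t0 l c w3 ->
  in_arc a (l + INR k * PI - v * (t0 + INR k * PI)) ->
  in_omega v a e (t0 + INR k * PI) (ray p q (t0 + INR k * PI)).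
Proof.
  intros He Hcw Hch Harc. rewrite <- (Rplus_0_r (t0 + INR k * PI)).
  apply (in_omega_chart v a e p q t0 l c w3 k 0 He Hcw Hch); [rewrite Rabs_R0; lra|].
  now rewrite tan_0, Rmult_0_r, atan_0, !Rplus_0_r.
Qed.

Lemma in_omega_sweep v a e p q t0 l c w3 (k : nat) u1 u2 :
  0 < a < 2 * PI -> 0 < e < 1 -> c * c + w3 * w3 = 1 -> node_chart p q t0 l c w3 ->
  -e < u1 -> u1 < u2 -> u2 < e ->
  2 * PI - a < atan (c * tan u1) - atan (c * tan u2) + v * (u2 - u1) ->
  exists t, t0 + INR k * PI + u1 <= t <= t0 + INR k * PI + u2 /\ in_omega v a e t (ray p q t).
Proof.
  intros Ha He Hcw Hch H1 H12 H2 Hd. pose proof PI_gt_3.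
  set (f := fun tau => l + INR k * PI + atan (c * tan tau) - v * (t0 + INR k * PI + tau)).
  destruct (in_arc_sweep a f u1 u2 Ha H12) as [x [Hx Harc]].
  - intros x Hx. apply derivable_continuous_pt. unfold f.
    apply derivable_pt_minus; [apply derivable_pt_plus; [apply derivable_pt_const|]|].
    + apply (derivable_pt_comp (fun t => c * tan t) atan); [|apply derivable_pt_atan].
      apply derivable_pt_scal, derivable_pt_tan. lra.
    + apply derivable_pt_scal, derivable_pt_plus;
        [apply derivable_pt_const | apply derivable_pt_id].
  - unfold f. lra.
  - exists (t0 + INR k * PI + x). split; [lra|].
    apply (in_omega_chart v a e p q t0 l c w3 k x He Hcw Hch); [apply Rabs_def1; lra | exact Harc].
Qed.

Lemma in_omega_fast_sweep v a e p q t0 l c w3 (k : nat) u1 u2 :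
  0 < a < 2 * PI -> 0 < e < 1 -> c * c + w3 * w3 = 1 -> node_chart p q t0 l c w3 ->
  -e < u1 -> u2 < e -> 3 * PI <= v * (u2 - u1) -> u1 < u2 ->
  exists t, t0 + INR k * PI + u1 <= t <= t0 + INR k * PI + u2 /\ in_omega v a e t (ray p q t).
Proof.
  intros Ha He Hcw Hch H1 H2 Hv H12.
  apply (in_omega_sweep v a e p q t0 l c w3 k u1 u2 Ha He Hcw Hch H1 H12 H2).
  pose proof (atan_bound (c * tan u1)). pose proof (atan_bound (c * tan u2)). lra.
Qed.

Lemma T0_bounds v a e L T : 0 < T -> GCC v a e T ->
  (forall T', 0 < T' -> GCC v a e T' -> L <= T') ->
  is_finite (T0 v a e) /\ L <= real (T0 v a e) <= T.
Proof.
  intros HT HG HL. unfold T0.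
  destruct (Glb_Rbar_correct (fun T => 0 < T /\ GCC v a e T)) as [Hlb Hglb].
  assert (Hle : Rbar_le (Glb_Rbar (fun T => 0 < T /\ GCC v a e T)) T) by (apply Hlb; auto).
  assert (Hge : Rbar_le L (Glb_Rbar (fun T => 0 < T /\ GCC v a e T))).
  { apply Hglb. intros x [Hx HGx]. apply HL; auto. }
  destruct (Glb_Rbar _); simpl in *; try contradiction. split; [reflexivity | lra].
Qed.

Lemma T0_finite v a e T : 0 < T -> GCC v a e T -> is_finite (T0 v a e).
Proof. intros HT HG. apply (T0_bounds v a e 0 T HT HG). intros; lra. Qed.

Lemma T0_infinite v a e : (forall T, ~ GCC v a e T) -> T0 v a e = p_infty.
Proof.
  intros H. unfold T0. apply is_glb_Rbar_unique. split.
  - intros x [_ HG]. exfalso. exact (H x HG).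
  - intros b _. destruct b; simpl; auto.
Qed.

Lemma GCC_ge_small_speed v a e T : 0 < v -> e < 1 -> 0 < T -> GCC v a e T -> (PI - a) / v <= T.
Proof.
  intros Hv He HT HG. pose proof PI_gt_3.
  destruct (HG _ _ (orthonormal_meridian 0)) as [t [Ht Hom]].
  rewrite meridian_ray in Hom.
  destruct (in_omega_meridian v a e 0 t t He Hom) as [k [K [_ HK]]].
  replace (0 + IZR k * PI + 2 * IZR K * PI) with (IZR (k + 2 * K) * PI) in HK
    by (rewrite plus_IZR, mult_IZR; ring).
  apply Rle_div_l; [lra|].
  destruct (Z.le_gt_cases (k + 2 * K) 0) as [Hn|Hn].
  - apply IZR_le in Hn. nra.
  - assert (1 <= IZR (k + 2 * K)) by (apply IZR_le; lia). nra.
Qed.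

(* The meridian started at latitude [e] can only enter the band [|phi| < e] after
   crossing the pole, i.e. after time [PI - 2 e]. *)
Lemma GCC_ge_PI_sub v a e T : 0 < e < 1 -> 0 < T -> GCC v a e T -> PI - 2 * e <= T.
Proof.
  intros He HT HG. pose proof PI_gt_3.
  destruct (HG _ _ (orthonormal_ray_frame _ _ e (orthonormal_meridian 0))) as [t [Ht Hom]].
  rewrite <- ray_add, meridian_ray in Hom.
  destruct (in_omega_meridian v a e 0 (e + t) t ltac:(lra) Hom) as [k [K [Hk _]]].
  apply Rabs_def2 in Hk.
  destruct (Z.le_gt_cases k 0) as [Hn|Hn].
  - apply IZR_le in Hn. nra.
  - assert (1 <= IZR k) by (apply IZR_le; lia). nra.
Qed.

(* For [v = n / D] the meridian at longitude [PI / (2 D)] meets the band only near the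
   times [k PI], where the window edge [v k PI] lies on the lattice [(PI / D) Z], at
   distance at least [PI / (2 D)] from the nodes [PI / (2 D) + k PI] of the meridian. *)
Lemma GCC_fails_rational_speed (q : Q) a e T : 0 < Q2R q ->
  a < PI / (4 * IZR (Z.pos (Qden q))) -> e < 1 -> Q2R q * e < PI / (8 * IZR (Z.pos (Qden q))) ->
  ~ GCC (Q2R q) a e T.
Proof.
  intros Hv Ha He Hve HG. pose proof PI_gt_3.
  set (D := IZR (Z.pos (Qden q))) in *.
  assert (HD : 0 < D) by (apply IZR_lt; lia).
  set (d := PI / (8 * D)).
  assert (Hd : 0 < d) by (apply Rdiv_lt_0_compat; lra).
  destruct (HG _ _ (orthonormal_meridian (4 * d))) as [t [Ht Hom]].
  rewrite meridian_ray in Hom.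
  destruct (in_omega_meridian _ a e (4 * d) t t He Hom) as [k [K [Hk HK]]].
  set (j := (Z.pos (Qden q) * (k + 2 * K) - Qnum q * k)%Z).
  assert (Ej : 4 * d + IZR k * PI + 2 * IZR K * PI - Q2R q * t
     = 4 * d + 8 * IZR j * d - Q2R q * (t - IZR k * PI)).
  { unfold j, d, Q2R, D in *. rewrite minus_IZR, !mult_IZR, plus_IZR, mult_IZR. field. lra. }
  assert (Hdrift : Rabs (Q2R q * (t - IZR k * PI)) < d).
  { rewrite Rabs_mult, Rabs_pos_eq by lra.
    apply Rle_lt_trans with (Q2R q * e); [apply Rmult_le_compat_l; lra | exact Hve]. }
  apply Rabs_def2 in Hdrift.
  assert (Ha' : a < 2 * d) by (unfold d; replace (2 * (PI / (8 * D))) with (PI / (4 * D))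
    by (field; lra); exact Ha).
  destruct (Z.le_gt_cases 0 j) as [Hj|Hj].
  - apply IZR_le in Hj. assert (0 <= IZR j * d) by (apply Rmult_le_pos; lra). lra.
  - assert (IZR j <= -1) by (apply IZR_le; lia).
    assert (IZR j * d <= -1 * d) by (apply Rmult_le_compat_r; lra). lra.
Qed.

(* Above [v1] the window turns by more than [2 PI - a] relative to the ray during one
   passage through the band, since the ray's own longitude moves by less than the time
   it spends there ([Rabs_atan_mult_tan]). *)
Lemma GCC_above_v1 v a e : 0 < a < 2 * PI -> 0 < e < 1 ->
  (2 * PI - a + 2 * e) / (2 * e) < v -> GCC v a e (2 * PI + 2).
Proof.
  intros Ha He Hv. pose proof PI_gt_3.
  apply Rlt_div_l in Hv; [|lra].
  assert (Hv1 : 1 < v) by (apply (Rmult_lt_reg_r (2 * e)); lra).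
  set (X := (2 * PI - a) / (2 * (v - 1))).
  assert (HX : X < e) by (apply Rlt_div_l; lra).
  assert (HX0 : 0 < X) by (apply Rdiv_lt_0_compat; lra).
  assert (EX : 2 * (v - 1) * X = 2 * PI - a) by (unfold X; field; lra).
  set (s := (e + X) / 2).
  assert (Hs : 2 * PI - a < 2 * (v - 1) * s) by (unfold s; nra).
  intros p q Ho.
  destruct (ray_node_chart p q e Ho) as [t0 [l [c [w3 [Ht0 [Hcw Hch]]]]]].
  destruct (in_omega_sweep v a e p q t0 l c w3 0 (- s) s Ha He Hcw Hch) as [t [Ht Hom]];
    [unfold s; lra .. | |].
  - pose proof (Rabs_atan_mult_tan c (- s) ltac:(nra) ltac:(unfold s; lra)) as H1.
    pose proof (Rabs_atan_mult_tan c s ltac:(nra) ltac:(unfold s; lra)) as H2.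
    rewrite Rabs_Ropp in H1. rewrite (Rabs_pos_eq s) in H1, H2 by (unfold s; lra).
    apply Rabs_le_between in H1. apply Rabs_le_between in H2. lra.
  - exists t. simpl in Ht. split; [unfold s in *; lra | exact Hom].
Qed.

(* For [v > 12 PI / h] any stay of length [h / 4] in the band suffices; one starts
   before time [PI - 2 e + h]: at the entry [t0 - e], right away, or at the next node. *)
Lemma GCC_large_speed a e w : 0 < a < 2 * PI -> 0 < e < 1 -> 0 < w ->
  exists V, forall v, V < v -> GCC v a e (PI - 2 * e + w).
Proof.
  intros Ha He Hw. pose proof PI_gt_3.
  set (h := Rmin (w / 4) e).
  assert (Hh1 : h <= w / 4) by apply Rmin_l.
  assert (Hh2 : h <= e) by apply Rmin_r.
  assert (Hh0 : 0 < h) by (apply Rmin_glb_lt; lra).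
  exists (12 * PI / h). intros v Hv p q Ho.
  apply Rlt_div_l in Hv; [|lra].
  destruct (ray_node_chart p q (- e) Ho) as [t0 [l [c [w3 [Ht0 [Hcw Hch]]]]]].
  assert (Hsweep : forall (k : nat) u, -e < u -> u + h / 4 < e ->
    0 < t0 + INR k * PI + u -> t0 + INR k * PI + u + h / 4 < PI - 2 * e + w ->
    exists t, 0 < t < PI - 2 * e + w /\ in_omega v a e t (ray p q t)).
  { intros k u H1 H2 H3 H4.
    destruct (in_omega_fast_sweep v a e p q t0 l c w3 k u (u + h / 4) Ha He Hcw Hch)
      as [t [Ht Hom]]; [lra | lra | lra | lra |].
    exists t. split; [lra | exact Hom]. }
  destruct (Rle_or_lt e t0) as [Hlate|Hearly]; [|destruct (Rle_or_lt h (t0 + e)) as [Hmid|Hnode]].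
  - apply (Hsweep 0%nat (- e + h / 4)); simpl; lra.
  - apply (Hsweep 0%nat (- t0 + h / 4)); simpl; lra.
  - apply (Hsweep 1%nat (- e + h / 4)); simpl; lra.
Qed.

(* After [k1] half-turns a node of the ray has moved by [k1 PI] in longitude and the
   window by [v k1 PI], so relative to the window the nodes advance by [d] mod [2 PI];
   steps [0 < |d| < a] cannot jump over the window. *)
Lemma GCC_of_node_drift v a e (k1 : nat) (m : Z) : 0 < a < 2 * PI -> 0 < e < 1 ->
  0 < Rabs (INR k1 * PI * (1 - v) + 2 * IZR m * PI) < a ->
  exists T, 0 < T /\ GCC v a e T.
Proof.
  intros Ha He Hd. pose proof PI_gt_3.
  set (d := INR k1 * PI * (1 - v) + 2 * IZR m * PI) in *.
  destruct (in_arc_progression a d Hd) as [J HJ].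
  pose proof (pos_INR (J * k1)).
  exists (PI + INR (J * k1) * PI + 1). split; [nra|].
  intros p q Ho.
  destruct (ray_node_chart p q 0 Ho) as [t0 [l [c [w3 [Ht0 [Hcw Hch]]]]]].
  destruct (HJ (l - v * t0)) as [j [HjJ Harc]].
  assert (Hjk : INR (j * k1) <= INR (J * k1)) by (apply le_INR, Nat.mul_le_mono_r, HjJ).
  pose proof (pos_INR (j * k1)).
  exists (t0 + INR (j * k1) * PI). split; [split; nra|].
  apply (in_omega_node v a e p q t0 l c w3 (j * k1) He Hcw Hch).
  replace (l + INR (j * k1) * PI - v * (t0 + INR (j * k1) * PI))
    with (l - v * t0 + INR j * d - 2 * IZR (Z.of_nat j * m) * PI)
    by (unfold d; rewrite mult_IZR, <- INR_IZR_INZ, mult_INR; ring).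
  now apply in_arc_sub_2PI.
Qed.

(* The node longitudes [l + k PI] form two antipodal points; a window of width
   [a > (2 PI + 1) v] reaches one of them before time [(PI - a) / v + O(1)] and stays
   over it for longer than [2 PI], enough for a node of the right parity. *)
Lemma slow_window_meets_node v a t0 l : 0 < a < PI -> 0 < v -> (2 * PI + 1) * v < a ->
  0 < t0 <= PI -> exists k : nat, t0 + INR k * PI < (PI - a) / v + 4 * PI + 2 /\
    in_arc a (l + INR k * PI - v * (t0 + INR k * PI)).
Proof.
  intros Ha Hv Hslow Ht0. pose proof PI_gt_3.
  destruct (exists_Z_mult_le PI (l - (2 * PI + 1) * v) ltac:(lra)) as [n Hn].
  set (rho := l - IZR n * PI).
  assert (Hpar : exists (r : nat) (M : Z), (r <= 1)%nat /\ n = (2 * M + Z.of_nat r)%Z).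
  { destruct (Z.Even_or_Odd n) as [[M HM]|[M HM]]; [exists 0%nat | exists 1%nat];
      exists M; split; lia. }
  destruct Hpar as [r [M [Hr Hn2]]].
  assert (Hr' : 0 <= INR r <= 1) by (split; [apply pos_INR | apply (le_INR r 1), Hr]).
  set (L0 := Rmax 0 ((rho - a) / v)).
  assert (HL0 : 0 <= L0) by apply Rmax_l.
  assert (HL1 : rho - a <= v * L0).
  { apply (Rle_div_l (rho - a) L0 v) in Hv as Hd. rewrite Rmult_comm. apply Hd, Rmax_r. }
  assert (HL2 : v * L0 + 2 * PI * v < rho).
  { unfold L0. apply Rmax_case; unfold rho in *; [nra|].
    replace (v * ((l - IZR n * PI - a) / v)) with (l - IZR n * PI - a) by (field; lra). nra. }
  destruct (exists_nat_mult_in (2 * PI) (L0 - t0 - INR r * PI) ltac:(lra) ltac:(nra)) as [j Hj].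
  exists (r + 2 * j)%nat. rewrite plus_INR, mult_INR. simpl (INR 2).
  split.
  - assert (Hrho : (rho - a) / v <= (PI - a) / v + 2 * PI + 1).
    { apply Rle_div_l; [lra|]. unfold rho. field_simplify; [lra|lra]. }
    assert (L0 <= (PI - a) / v + 2 * PI + 1).
    { unfold L0. apply Rmax_case; [|exact Hrho].
      assert (0 < (PI - a) / v) by (apply Rdiv_lt_0_compat; lra). lra. }
    lra.
  - exists (- (M + Z.of_nat r + Z.of_nat j))%Z.
    rewrite opp_IZR, !plus_IZR, <- !INR_IZR_INZ.
    assert (Ht : L0 < t0 + (INR r + 2 * INR j) * PI <= L0 + 2 * PI) by lra.
    assert (Ehn : IZR n = 2 * IZR M + INR r)
      by (rewrite Hn2, plus_IZR, mult_IZR, <- INR_IZR_INZ; ring).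
    unfold rho in *. rewrite Ehn in *. nra.
Qed.

Lemma GCC_small_speed v a e : 0 < a < PI -> 0 < e < 1 -> 0 < v -> (2 * PI + 1) * v < a ->
  GCC v a e ((PI - a) / v + 4 * PI + 2).
Proof.
  intros Ha He Hv Hslow p q Ho.
  destruct (ray_node_chart p q 0 Ho) as [t0 [l [c [w3 [Ht0 [Hcw Hch]]]]]].
  destruct (slow_window_meets_node v a t0 l Ha Hv Hslow ltac:(lra)) as [k [Hk Harc]].
  exists (t0 + INR k * PI). pose proof (pos_INR k). pose proof PI_RGT_0.
  split; [split; nra|]. now apply (in_omega_node v a e p q t0 l c w3 k He Hcw Hch).
Qed.

(** * Non-critical speeds *)

Lemma pigeonhole_nat (f : nat -> nat) (N : nat) : (forall k, (k <= N)%nat -> (f k < N)%nat) ->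
  exists k k', (k < k' <= N)%nat /\ f k = f k'.
Proof.
  intros Hf. apply NNPP. intros Hno.
  assert (HD : NoDup (map f (seq 0 (S N)))).
  { apply NoDup_map_NoDup_ForallPairs; [|apply seq_NoDup].
    intros x y Hx Hy Hxy. apply in_seq in Hx, Hy.
    destruct (Nat.lt_total x y) as [h|[h|h]]; [| exact h |]; exfalso; apply Hno.
    - exists x, y. split; [lia | exact Hxy].
    - exists y, x. split; [lia | auto]. }
  assert (HI : incl (map f (seq 0 (S N))) (seq 0 N)).
  { intros z Hz. apply in_map_iff in Hz. destruct Hz as [x [<- Hx]].
    apply in_seq in Hx. apply in_seq. specialize (Hf x ltac:(lia)). lia. }
  pose proof (NoDup_incl_length HD HI) as Hlen. rewrite length_map, !length_seq in Hlen. lia.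
Qed.

Lemma dirichlet_approx (x : R) (N : nat) : (1 <= N)%nat ->
  exists k : nat, (1 <= k <= N)%nat /\ exists m : Z, Rabs (INR k * x - IZR m) < 1 / INR N.
Proof.
  intros HN. assert (HNr : 1 <= INR N) by (apply (le_INR 1); exact HN).
  set (fr := fun k : nat => frac_part (INR k * x)).
  set (box := fun k : nat => Z.to_nat (Int_part (INR N * fr k))).
  assert (Hbox : forall k, IZR (Z.of_nat (box k)) <= INR N * fr k < IZR (Z.of_nat (box k)) + 1).
  { intros k. pose proof (base_fp (INR k * x)). pose proof (base_Int_part (INR N * fr k)).
    unfold box. rewrite Znat.Z2Nat.id; [unfold fr in *; lra|].
    assert (-1 < IZR (Int_part (INR N * fr k))) by (unfold fr in *; nra).
    apply lt_IZR in H1. lia. }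
  destruct (pigeonhole_nat box N) as [k [k' [Hkk Hb]]].
  { intros k _. pose proof (Hbox k). pose proof (base_fp (INR k * x)).
    apply Znat.Nat2Z.inj_lt, lt_IZR. rewrite <- (INR_IZR_INZ N). unfold fr in *. nra. }
  exists (k' - k)%nat. split; [lia|].
  exists (Int_part (INR k' * x) - Int_part (INR k * x))%Z.
  rewrite minus_INR, minus_IZR by lia.
  replace ((INR k' - INR k) * x - (IZR (Int_part (INR k' * x)) - IZR (Int_part (INR k * x))))
    with (fr k' - fr k) by (unfold fr, frac_part; ring).
  pose proof (Hbox k) as H1. pose proof (Hbox k') as H2. rewrite Hb in H1.
  assert (E : INR N * (1 / INR N) = 1) by (field; lra).
  apply Rabs_def1; apply (Rmult_lt_reg_l (INR N)); lra.
Qed.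

Definition critical_speeds (N M : nat) : list R :=
  flat_map (fun n => map (fun i => 1 - 2 * (INR i - INR M) / INR n) (seq 0 (2 * M + 1)))
    (seq 1 N).

Lemma in_critical_speeds N M (n : nat) (m : Z) : (1 <= n <= N)%nat ->
  - INR M < IZR m < INR M -> In (1 - 2 * IZR m / INR n) (critical_speeds N M).
Proof.
  intros Hn [Hm1 Hm2]. rewrite INR_IZR_INZ, <- opp_IZR in Hm1. rewrite INR_IZR_INZ in Hm2.
  apply lt_IZR in Hm1, Hm2.
  apply in_flat_map. exists n. split; [apply in_seq; lia|].
  apply in_map_iff. exists (Z.to_nat (m + Z.of_nat M)). split.
  - rewrite INR_IZR_INZ, Znat.Z2Nat.id, plus_IZR, <- INR_IZR_INZ by lia.
    f_equal. f_equal. f_equal. ring.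
  - apply in_seq. lia.
Qed.

(* Off the critical speeds [1 - 2 m / n], Dirichlet's approximation of [(1 - v) / 2]
   yields a node drift [0 < |d| < 2 PI / N < a]; above [v1] no drift is needed. *)
Lemma T0_finite_off_critical a e : 0 < a < 2 * PI -> 0 < e < 1 ->
  exists crit : list R, forall v, 0 < v -> ~ In v crit -> is_finite (T0 v a e).
Proof.
  intros Ha He. pose proof PI_gt_3.
  set (v1 := (2 * PI - a + 2 * e) / (2 * e)).
  assert (Hv1 : 1 < v1) by (apply Rlt_div_r; lra).
  destruct (exists_nat_mult_in 1 (2 * PI / a) ltac:(lra)) as [N HN].
  { assert (0 < 2 * PI / a) by (apply Rdiv_lt_0_compat; lra). lra. }
  rewrite Rmult_1_r in HN. destruct HN as [HN _].
  assert (HNa : 2 * PI / INR N < a).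
  { assert (0 < 2 * PI / a) by (apply Rdiv_lt_0_compat; lra).
    apply Rlt_div_l; [lra|]. apply Rlt_div_l in HN; lra. }
  assert (HNr : 1 <= INR N) by (assert (1 < 2 * PI / a) by (apply Rlt_div_r; lra); lra).
  assert (HN1 : (1 <= N)%nat) by (apply INR_le; simpl; lra).
  destruct (exists_nat_mult_in 1 (INR N * v1) ltac:(lra) ltac:(nra)) as [M HM].
  rewrite Rmult_1_r in HM. destruct HM as [HM _].
  exists (critical_speeds N M). intros v Hv Hcrit.
  destruct (Rlt_or_le v1 v) as [Hfast|Hslow].
  { apply (T0_finite v a e (2 * PI + 2)); [lra | now apply GCC_above_v1]. }
  destruct (dirichlet_approx ((1 - v) / 2) N HN1) as [k [Hk [m Hm]]].
  assert (Hkr : 1 <= INR k <= INR N) by (split; [apply (le_INR 1) | apply le_INR]; lia).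
  destruct (Req_dec (INR k * ((1 - v) / 2) - IZR m) 0) as [H0|H0].
  - exfalso. apply Hcrit.
    replace v with (1 - 2 * IZR m / INR k)
      by (replace (IZR m) with (INR k * ((1 - v) / 2)) by lra; field; lra).
    apply in_critical_speeds; [lia | split; nra].
  - destruct (GCC_of_node_drift v a e k (- m) Ha He) as [T [HT HG]].
    + replace (INR k * PI * (1 - v) + 2 * IZR (- m) * PI)
        with (2 * PI * (INR k * ((1 - v) / 2) - IZR m)) by (rewrite opp_IZR; field).
      rewrite Rabs_mult, (Rabs_pos_eq (2 * PI)) by lra. split.
      * apply Rmult_lt_0_compat; [lra | now apply Rabs_pos_lt].
      * apply Rle_lt_trans with (2 * PI / INR N); [|exact HNa].
        unfold Rdiv. rewrite <- (Rmult_1_l (/ INR N)). apply Rmult_le_compat_l; lra.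
    + now apply (T0_finite v a e T).
Qed.

(** * Asymptotics of the control time *)

Lemma filterlim_at_right_0_of_bounds (f : R -> R) (A C d : R) : 0 < A -> 0 <= C -> 0 < d ->
  (forall v, 0 < v < d -> A / v <= f v <= A / v + C) ->
  filterlim (fun v => v * f v / A) (at_right 0) (locally 1).
Proof.
  intros HA HC Hd Hf. apply filterlim_locally. intros eps.
  pose proof (cond_pos eps) as Heps.
  assert (Hdel : 0 < Rmin d (eps * A / (C + 1))).
  { apply Rmin_glb_lt; [exact Hd|]. apply Rdiv_lt_0_compat; nra. }
  exists (mkposreal _ Hdel). intros v Hball Hv. simpl in Hball.
  change (Rabs (v - 0) < Rmin d (eps * A / (C + 1))) in Hball.
  rewrite Rminus_0_r, Rabs_pos_eq in Hball by lra.
  assert (Hvd : v < d) by (pose proof (Rmin_l d (eps * A / (C + 1))); lra).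
  assert (Hve : v * (C + 1) < eps * A).
  { apply Rlt_div_r; [lra|]. pose proof (Rmin_r d (eps * A / (C + 1))); lra. }
  destruct (Hf v (conj Hv Hvd)) as [Hlo Hhi].
  apply (Rmult_le_compat_l v) in Hlo, Hhi; try lra.
  replace (v * (A / v)) with A in Hlo by (field; lra).
  replace (v * (A / v + C)) with (A + v * C) in Hhi by (field; lra).
  assert (H1 : v * f v / A < 1 + eps) by (apply Rlt_div_l; nra).
  assert (H2 : 1 <= v * f v / A) by (apply Rle_div_r; lra).
  change (Rabs (v * f v / A - 1) < eps). apply Rabs_def1; lra.
Qed.

Lemma filterlim_p_infty_of_bounds (g : R -> R) (L : R) :
  (forall w, 0 < w -> exists V, forall v, V < v -> L <= g v <= L + w) ->
  filterlim g (Rbar_locally p_infty) (locally L).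
Proof.
  intros Hg. apply filterlim_locally. intros eps.
  pose proof (cond_pos eps) as Heps.
  destruct (Hg (eps / 2) ltac:(lra)) as [V HV].
  exists V. intros v Hv. destruct (HV v Hv) as [H1 H2].
  change (Rabs (g v - L) < eps). apply Rabs_def1; lra.
Qed.

Lemma T0_small_speed_bounds v a e : 0 < a < PI -> 0 < e < 1 -> 0 < v < a / (2 * PI + 1) ->
  is_finite (T0 v a e) /\ (PI - a) / v <= real (T0 v a e) <= (PI - a) / v + 4 * PI + 2.
Proof.
  intros Ha He Hv. pose proof PI_gt_3.
  assert (0 < (PI - a) / v) by (apply Rdiv_lt_0_compat; lra).
  apply T0_bounds; [lra | |].
  - apply GCC_small_speed; try lra. rewrite Rmult_comm. apply Rlt_div_r; lra.
  - intros T HT HG. apply (GCC_ge_small_speed v a e T); lra || assumption.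
Qed.

Lemma T0_large_speed_bounds a e w : 0 < a < 2 * PI -> 0 < e < 1 -> 0 < w ->
  exists V, forall v, V < v -> PI - 2 * e <= real (T0 v a e) <= PI - 2 * e + w.
Proof.
  intros Ha He Hw. pose proof PI_gt_3.
  destruct (GCC_large_speed a e w Ha He Hw) as [V HV].
  exists V. intros v Hv.
  apply (T0_bounds v a e (PI - 2 * e) (PI - 2 * e + w)); [lra | now apply HV |].
  intros T HT HG. now apply (GCC_ge_PI_sub v a e T).
Qed.

Lemma T0_rational_speed (q : Q) : 0 < Q2R q ->
  exists a0 eps0 : R, 0 < a0 /\ 0 < eps0 /\
    forall a eps : R, 0 < a < a0 -> 0 < eps < eps0 -> T0 (Q2R q) a eps = p_infty.
Proof.
  intros Hq. pose proof PI_gt_3.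
  set (D := IZR (Z.pos (Qden q))).
  assert (HD : 0 < D) by (apply IZR_lt; lia).
  set (b := PI / (8 * D * Q2R q)).
  assert (Hb : 0 < b) by (apply Rdiv_lt_0_compat; [lra | apply Rmult_lt_0_compat; lra]).
  exists (PI / (4 * D)), (Rmin (1 / 2) b).
  split; [apply Rdiv_lt_0_compat; lra|]. split; [apply Rmin_glb_lt; lra|].
  intros a e Ha He. apply T0_infinite. intros T.
  assert (He1 : e < 1 / 2) by (pose proof (Rmin_l (1 / 2) b); lra).
  assert (Heb : e < b) by (pose proof (Rmin_r (1 / 2) b); lra).
  apply GCC_fails_rational_speed; fold D; [exact Hq | lra | lra |].
  apply (Rmult_lt_compat_l (Q2R q)) in Heb; [|exact Hq].
  replace (Q2R q * b) with (PI / (8 * D)) in Heb by (unfold b; field; lra). exact Heb.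
Qed.

Theorem proposition3p1 :
  (forall a eps : R, 0 < a < 2 * PI -> 0 < eps < 1 ->
     (* finitely many critical speeds *)
     (exists crit : list R, forall v : R, 0 < v -> ~ In v crit -> is_finite (T0 v a eps))
     (* T0 ~ (pi - a)/v as v -> 0+ (meaningful for a < pi) *)
  /\ (a < PI ->
        (exists d : R, 0 < d /\ forall v, 0 < v < d -> is_finite (T0 v a eps))
        /\ filterlim (fun v => v * real (T0 v a eps) / (PI - a)) (at_right 0) (locally 1))
     (* finite above v1 *)
  /\ (forall v : R, (2 * PI - a + 2 * eps) / (2 * eps) < v -> is_finite (T0 v a eps))
     (* limit pi - 2 eps as v -> +oo *)
  /\ filterlim (fun v => real (T0 v a eps)) (Rbar_locally p_infty) (locally (PI - 2 * eps)))
  /\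
  (* rational speeds: T0 = +oo for small a, eps *)
  (forall q : Q, 0 < Q2R q ->
     exists a0 eps0 : R, 0 < a0 /\ 0 < eps0 /\
       forall a eps : R, 0 < a < a0 -> 0 < eps < eps0 -> T0 (Q2R q) a eps = p_infty).
Proof.
  split; [|exact T0_rational_speed].
  intros a e Ha He. pose proof PI_gt_3.
  split; [now apply T0_finite_off_critical|]. split; [|split].
  - intros HaPI. set (d := a / (2 * PI + 1)).
    assert (Hd : 0 < d) by (apply Rdiv_lt_0_compat; lra).
    split.
    + exists d. split; [exact Hd|]. intros v Hv. now apply T0_small_speed_bounds.
    + apply (filterlim_at_right_0_of_bounds _ (PI - a) (4 * PI + 2) d); [lra | lra | exact Hd |].
      intros v Hv. destruct (T0_small_speed_bounds v a e) as [_ Hb]; [lra | exact He | exact Hv |].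
      lra.
  - intros v Hv. apply (T0_finite v a e (2 * PI + 2)); [lra | now apply GCC_above_v1].
  - apply filterlim_p_infty_of_bounds. intros w Hw. now apply T0_large_speed_bounds.
Qed.
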